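(* Let $(\mathcal{A},v)$ be a valued abelian group and $A_1,\dots,A_n$ subgroups of $\mathcal{A}$ such that each $(A_i,v)$ is spherically complete. If the sum $A_1+\dots+A_n$ is pseudo-direct, then $(A_1+\dots+A_n,v)$ is spherically complete and has the optimal approximation property in $\mathcal{A}$: for every $z\in\mathcal{A}$ there is $y_0\in A_1+\dots+A_n$ with $v(z-y_0)=\max\{v(z-y)\mid y\in A_1+\dots+A_n\}$.
   Context: A valued abelian group $(G,v)$ is an abelian group with a map $v$ onto $vG\cup\{\infty\}$ ($vG$ totally ordered, $\infty$ maximal) with $va=\infty$ iff $a=0$ and $v(a-b)\ge\min\{va,vb\}$; subgroups carry the restricted $v$. It is spherically complete if in the ultrametric space $u(a,b)=v(a-b)$ every nest (family totally ordered by inclusion) of balls has non-empty intersection, balls being unions of non-empty collections of closed balls $\{x:v(x-c)\ge\alpha\}$ with a common element. The sum $A_1+\dots+A_n$ is pseudo-direct if for every nonzero $a'\in A_1+\dots+A_n$ there are $a_i\in A_i$ with $v\sum_{i=1}^na_i=\min_iva_i$ and $v(a'-\sum_{i=1}^na_i)>va'$. *)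

From HB Require Import structures.
From mathcomp Require Import all_boot all_order all_algebra.
Set Implicit Arguments. Unset Strict Implicit. Unset Printing Implicit Defensive.
Import Order.TTheory GRing.Theory.

Local Open Scope ring_scope.

Definition is_valuation (G : zmodType) (d : Order.disp_t) (Gam : orderType d)
    (oo : Gam) (v : G -> Gam) : Prop :=
  [/\ (forall g : Gam, (g <= oo)%O),
      (forall a : G, v a = oo <-> a = 0) &
      (forall a b : G, (Order.min (v a) (v b) <= v (a - b))%O)].

Definition is_subgroup (G : zmodType) (A : G -> Prop) : Prop :=
  A 0 /\ (forall x y, A x -> A y -> A (x - y)).

Section Balls.
Variables (G : zmodType) (d : Order.disp_t) (Gam : orderType d).

Definition cball (A : G -> Prop) (v : G -> Gam) (c : G) (al : Gam) : G -> Prop :=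
  fun x => A x /\ (al <= v (x - c))%O.

Definition is_ball (A : G -> Prop) (v : G -> Gam) (B : G -> Prop) : Prop :=
  exists S : G * Gam -> Prop,
    [/\ (exists p, S p),
        (forall p, S p -> A p.1),
        (exists z, forall p, S p -> cball A v p.1 p.2 z) &
        (forall x, B x <-> exists p, S p /\ cball A v p.1 p.2 x)].

Definition is_nest (A : G -> Prop) (v : G -> Gam) (N : (G -> Prop) -> Prop) : Prop :=
  (forall B, N B -> is_ball A v B) /\
  (forall B1 B2, N B1 -> N B2 ->
     (forall x, B1 x -> B2 x) \/ (forall x, B2 x -> B1 x)).

Definition spherically_complete (A : G -> Prop) (v : G -> Gam) : Prop :=
  forall N, is_nest A v N -> exists x, A x /\ (forall B, N B -> B x).

Definition sumsub (n : nat) (A : 'I_n -> G -> Prop) : G -> Prop :=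
  fun x => exists a : 'I_n -> G, (forall i, A i (a i)) /\ x = \sum_(i < n) a i.

Definition pseudo_direct (v : G -> Gam) (oo : Gam) (n : nat)
    (A : 'I_n -> G -> Prop) : Prop :=
  forall a', sumsub A a' -> a' <> 0 ->
    exists a : 'I_n -> G,
      [/\ (forall i, A i (a i)),
          v (\sum_(i < n) a i) = \big[Order.min/oo]_(i < n) v (a i) &
          (v a' < v (a' - \sum_(i < n) a i))%O].

Definition optimal_approximation (B : G -> Prop) (v : G -> Gam) : Prop :=
  forall z : G, exists y0, B y0 /\ (forall y, B y -> (v (z - y) <= v (z - y0))%O).

End Balls.

From mathcomp Require Import all_boot all_order all_algebra.
From mathcomp Require Import boolp classical_sets.
Set Implicit Arguments. Unset Strict Implicit. Unset Printing Implicit Defensive.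
Import Order.TTheory GRing.Theory.
Local Open Scope ring_scope.
Local Open Scope order_scope.

(* Pseudo-directness lets one correct an approximate decomposition: if
   s - \sum_i c_i <> 0, some b_i of value at least v (s - \sum_i c_i) have a sum
   strictly closer to s - \sum_i c_i.  Take, by Zorn's lemma, a maximal coherent
   family of approximate decompositions of s; spherical completeness of each A_i
   gives a componentwise limit c of the family, and maximality forbids any
   further correction, so s = \sum_i c_i with v (c_i) >= v s.  The same argument,
   run on pairs (decomposition, ball) along a nest of balls of A_1 + ... + A_n,
   yields a point in every ball of the nest.  Optimal approximation holds in any
   spherically complete subset: intersect the nest of balls around the points y
   of radius v (z - y). *)

Lemma maximal_compatible_family (T : Type) (P : T -> Prop) (R : T -> T -> Prop) :
  exists Q : T -> Prop,
    [/\ forall x, Q x -> P x, forall x y, Q x -> Q y -> R x y &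
        forall t, P t -> R t t -> (forall x, Q x -> R x t /\ R t x) -> Q t].
Proof.
pose compatible : set (set T) :=
  fun Q => (forall x, Q x -> P x) /\ (forall x y, Q x -> Q y -> R x y).
have [|Q [[QP QR] Qmax]] := @Zorn_bigcup T compatible.
  move=> F Fcomp Ftot; split=> [x [X FX Xx]|x y [X FX Xx] [Y FY Yy]].
    exact: (Fcomp X FX).1.
  have [XY|YX] := Ftot X Y FX FY.
    by apply: (Fcomp Y FY).2 => //; apply: XY.
  by apply: (Fcomp X FX).2 => //; apply: YX.
exists Q; split=> // t Pt Rtt RQt; apply: contrapT => Qt.
apply: (Qmax (fun x => Q x \/ x = t)).
  by split=> [x Qx|QQt]; [left | apply: Qt; apply: QQt; right].
split=> [x [/QP|->] //|x y [Qx|->] [Qy|->]] //.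
- exact: QR.
- exact: (RQt _ Qx).1.
- exact: (RQt _ Qy).2.
Qed.

Lemma subrBB (G : zmodType) (a b c : G) : (a - c) - (b - c) = a - b.
Proof. by rewrite opprB addrA subrK. Qed.

Definition upward_closed d (Gam : orderType d) (U : Gam -> Prop) :=
  forall g h, U g -> g <= h -> U h.

Lemma upward_closed_ge {d} {Gam : orderType d} {g : Gam} : upward_closed (fun h => g <= h).
Proof. by move=> h1 h2 /le_trans; apply. Qed.

Section Subgroups.
Variables (G : zmodType) (A : G -> Prop).
Hypothesis hA : is_subgroup A.

Lemma subgroup0 : A 0.
Proof. by case: hA. Qed.

Lemma subgroupB x y : A x -> A y -> A (x - y).
Proof. by case: hA => _; apply. Qed.

Lemma subgroupD x y : A x -> A y -> A (x + y).
Proof.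
case: hA => A0 AB Ax Ay; have -> : x + y = x - (0 - y) by rewrite sub0r opprK.
exact (AB _ _ Ax (AB _ _ A0 Ay)).
Qed.

End Subgroups.

Lemma sumsubB (G : zmodType) n (A : 'I_n -> G -> Prop) x y :
  (forall i, is_subgroup (A i)) -> sumsub A x -> sumsub A y -> sumsub A (x - y).
Proof.
move=> hA [a [Aa ->]] [b [Ab ->]]; exists (fun i => a i - b i).
by split=> [i|]; [exact (subgroupB (hA i) (Aa i) (Ab i)) | rewrite sumrB].
Qed.

Section Valuation.
Variables (G : zmodType) (d : Order.disp_t) (Gam : orderType d) (oo : Gam) (v : G -> Gam).
Hypothesis hv : is_valuation oo v.

Lemma le_oo {g} : g <= oo.
Proof. by case: hv. Qed.

Lemma valuation0 : v 0 = oo.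
Proof. by case: hv => _ h _; apply/h. Qed.

Lemma valuation_eq_oo a : v a = oo -> a = 0.
Proof. by case: hv => _ h _ /h. Qed.

Lemma valuationB_ge g a b : g <= v a -> g <= v b -> g <= v (a - b).
Proof. by case: hv => _ _ h ga gb; apply: le_trans (h a b); rewrite le_min ga gb. Qed.

Lemma valuationN a : v (- a) = v a.
Proof.
have le_vN b : v b <= v (- b).
  by rewrite -sub0r; apply: valuationB_ge => //; rewrite valuation0 le_oo.
by apply/le_anti; rewrite le_vN -{2}[a]opprK le_vN.
Qed.

Lemma valuation_subC a b : v (a - b) = v (b - a).
Proof. by rewrite -valuationN opprB. Qed.

Lemma valuationD_ge g a b : g <= v a -> g <= v b -> g <= v (a + b).
Proof. by move=> ga gb; rewrite -[b]opprK; apply: valuationB_ge; rewrite ?valuationN. Qed.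

Lemma valuation_eq_of_lt_sub x y : v x < v (x - y) -> v y = v x.
Proof.
move=> lt_x_xy.
have le_xy : v x <= v y.
  by rewrite -[y](subKr x); apply: valuationB_ge => //; apply: ltW.
apply/le_anti; rewrite le_xy andbT leNgt; apply/negP => lt_yx.
have : Order.min (v y) (v (x - y)) <= v (y + (x - y)).
  by apply: valuationD_ge; rewrite ge_min lexx ?orbT.
by rewrite [y + _]addrC subrK leNgt lt_min lt_yx lt_x_xy.
Qed.

Section UpwardClosed.
Variable U : Gam -> Prop.
Hypothesis upU : upward_closed U.

Lemma upward_closedB a b : U (v a) -> U (v b) -> U (v (a - b)).
Proof.
move=> Ua Ub; case: (leP (v a) (v b)) => ab.
  by apply: upU Ua _; apply: valuationB_ge.
by apply: upU Ub _; apply: valuationB_ge => //; apply: ltW.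
Qed.

Lemma upward_closedD a b : U (v a) -> U (v b) -> U (v (a + b)).
Proof. by move=> Ua Ub; rewrite -[b]opprK; apply: upward_closedB; rewrite ?valuationN. Qed.

Lemma upward_closed_sumB n (a b : 'I_n -> G) :
  U oo -> (forall i, U (v (a i - b i))) -> U (v (\sum_i a i - \sum_i b i)).
Proof.
move=> Uoo Uab; rewrite -sumrB.
by apply: (big_ind (fun x => U (v x))); rewrite ?valuation0 // => x y; apply: upward_closedD.
Qed.

End UpwardClosed.

Section Balls.
Variable X : G -> Prop.

Definition upball (c : G) (U : Gam -> Prop) : G -> Prop :=
  fun x => X x /\ U (v (x - c)).

Lemma is_ball_upball c U : X c -> U oo -> upward_closed U -> is_ball X v (upball c U).
Proof.
move=> Xc Uoo upU; exists (fun p => p.1 = c /\ U p.2); split.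
- by exists (c, oo).
- by move=> p [-> _].
- by exists c => p [-> _]; rewrite /cball subrr valuation0 le_oo.
- move=> x; split=> [[Xx Ux]|[p [[-> Up] [Xx le]]]]; first by exists (c, v (x - c)).
  by split=> //; apply: upU Up le.
Qed.

Lemma upball_sub c c' U U' : upward_closed U -> (forall g, U' g -> U g) ->
  U (v (c - c')) -> forall x, upball c' U' x -> upball c U x.
Proof.
move=> upU U'U Ucc' x [Xx U'x]; split=> //.
by rewrite -(subrBB x c c'); apply: upward_closedB => //; apply: U'U.
Qed.

Lemma ball_upball B : is_ball X v B ->
  exists U z, [/\ upward_closed U, B z & forall w, B w <-> upball z U w].
Proof.
move=> [S [[p0 Sp0] _ [z Sz] defB]].
exists (fun g => exists2 p, S p & p.2 <= g), z; split.
- by move=> g h [p Sp pg] gh; exists p => //; apply: le_trans gh.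
- by apply/defB; exists p0; split=> //; apply: Sz.
move=> w; split=> [/defB [p [Sp [Xw le]]]|[Xw [p Sp le]]].
  split=> //; exists p => //; have [_ lez] := Sz p Sp.
  by rewrite -(subrBB w z p.1); apply: valuationB_ge.
apply/defB; exists p; split=> //; split=> //; have [_ lez] := Sz p Sp.
by rewrite -[w](subrK z) -addrA; apply: valuationD_ge.
Qed.

(* Unlike the set [U] of a presentation [upball z U], the radii of a ball are
   determined by the ball alone and grow with it (radius_sub). *)
Definition is_radius (B : G -> Prop) (g : Gam) :=
  forall x y, X x -> B y -> g <= v (x - y) -> B x.

Lemma radius_upward B : upward_closed (is_radius B).
Proof. by move=> g h Rg gh x y Xx By hxy; apply: (Rg x y) => //; apply: le_trans hxy. Qed.

Lemma radius_oo B : is_radius B oo.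
Proof.
move=> x y _ By ooxy.
have /valuation_eq_oo/subr0_eq -> // : v (x - y) = oo by apply/le_anti; rewrite ooxy le_oo.
Qed.

Lemma radius_mem B x y : is_ball X v B -> B x -> B y -> is_radius B (v (x - y)).
Proof.
move=> /ball_upball [U [z [upU _ defB]]] /defB [_ Ux] /defB [_ Uy] x' y' Xx' By' le.
have [_ Uy'] := (defB y').1 By'.
have Uxy : U (v (x - y)) by rewrite -(subrBB x y z); apply: upward_closedB.
apply/defB; split=> //; rewrite -[x'](subrK y') -addrA.
by apply: upward_closedD => //; apply: upU Uxy le.
Qed.

(* If [v (y' - y)] is below [g], it is itself a radius of [B'] and smaller
   than [g]; otherwise the radius [g] of [B] applies from [y]. *)
Lemma radius_sub B B' y g : is_ball X v B' -> B y -> (forall x, B x -> B' x) ->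
  is_radius B g -> is_radius B' g.
Proof.
move=> ballB' By BB' Rg x y' Xx By' le; case: (leP g (v (y' - y))) => gy.
  apply/BB'/(Rg x y) => //.
  by rewrite -(subrBB x y y'); apply: valuationB_ge; rewrite // valuation_subC.
apply: (radius_mem ballB' By' (BB' _ By)) Xx By' _.
by apply: le_trans le; apply: ltW.
Qed.

Lemma spherically_complete_chain (I : Type) (Q : I -> Prop) (c : I -> G)
    (U : I -> Gam -> Prop) :
  spherically_complete X v -> (forall k, Q k -> X (c k)) ->
  (forall k, upward_closed (U k)) -> (forall k, U k oo) ->
  (forall k l, Q k -> Q l ->
     (forall g, U l g -> U k g) /\ U k (v (c k - c l)) \/
     (forall g, U k g -> U l g) /\ U l (v (c l - c k))) ->
  exists x, X x /\ forall k, Q k -> U k (v (x - c k)).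
Proof.
move=> scX Xc upU Uoo chain.
pose N W := exists k, Q k /\ W = upball (c k) (U k).
have nestN : is_nest X v N.
  split=> [W [k [Qk ->]]|W1 W2 [k [Qk ->]] [l [Ql ->]]].
    exact: is_ball_upball (Xc k Qk) (Uoo k) (upU k).
  by case: (chain k l Qk Ql) => [[Ulk Ukl]|[Ukl Ulk]]; [right|left]; apply: upball_sub.
have [x [Xx Nx]] := scX N nestN.
by exists x; split=> // k Qk; case: (Nx _ (ex_intro _ k (conj Qk erefl))).
Qed.

Lemma spherically_complete_optimal_approximation :
  spherically_complete X v -> optimal_approximation X v.
Proof.
move=> scX z.
have [|x [Xx Hx]] := spherically_complete_chain (c := id)
  (U := fun y g => v (z - y) <= g) scX (fun _ Xy => Xy) (fun=> upward_closed_ge)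
  (fun=> le_oo).
  move=> a b _ _.
  have le_ab a' b' : v (z - a') <= v (z - b') -> v (z - a') <= v (a' - b').
    move=> ab; rewrite -(subrBB a' b' z).
    by apply: valuationB_ge; rewrite [v (_ - z)]valuation_subC.
  case/orP: (le_total (v (z - a)) (v (z - b))) => ab; [left|right].
    by split=> [g /(le_trans ab)|]; last apply: le_ab.
  by split=> [g /(le_trans ab)|]; last apply: le_ab.
exists x; split=> // y Xy.
by rewrite -(subrBB z x y); apply: valuationB_ge => //; apply: Hx.
Qed.

End Balls.

Arguments radius_upward {X B}.
Arguments radius_oo {X B}.

Section Decompositions.
Variables (n : nat) (A : 'I_n -> G -> Prop).
Hypothesis hA : forall i, is_subgroup (A i).
Hypothesis hsc : forall i, spherically_complete (A i) v.

Lemma decomposition_chain (I : Type) (Q : I -> Prop) (a : I -> 'I_n -> G)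
    (U : I -> Gam -> Prop) :
  (forall k, Q k -> forall i, A i (a k i)) ->
  (forall k, upward_closed (U k)) -> (forall k, U k oo) ->
  (forall k l, Q k -> Q l ->
     (forall g, U l g -> U k g) /\ (forall i, U k (v (a k i - a l i))) \/
     (forall g, U k g -> U l g) /\ (forall i, U l (v (a l i - a k i)))) ->
  exists c : 'I_n -> G,
    (forall i, A i (c i)) /\ forall k, Q k -> forall i, U k (v (c i - a k i)).
Proof.
move=> Aa upU Uoo chain.
suff /choice [c Hc] : forall i, exists x, A i x /\ forall k, Q k -> U k (v (x - a k i)).
  by exists c; split=> [i|k Qk i]; have [Ac Uc] := Hc i; [|apply: Uc].
move=> i; apply: spherically_complete_chain => // [k Qk|k l Qk Ql]; first exact: Aa.
by case: (chain k l Qk Ql) => [[? /(_ i)]|[? /(_ i)]]; [left|right].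
Qed.

Lemma pseudo_direct_step x : pseudo_direct v oo A -> sumsub A x -> x <> 0 ->
  exists b : 'I_n -> G,
    [/\ forall i, A i (b i), forall i, v x <= v (b i) & v x < v (x - \sum_i b i)].
Proof.
move=> hpd Xx x0; have [b [Ab vb lt]] := hpd x Xx x0.
by exists b; split=> // i; rewrite -(valuation_eq_of_lt_sub lt) vb; apply: bigmin_le.
Qed.

Lemma pseudo_direct_decomposition s : pseudo_direct v oo A -> sumsub A s ->
  exists c : 'I_n -> G,
    [/\ forall i, A i (c i), \sum_i c i = s & forall i, v s <= v (c i)].
Proof.
move=> hpd Ss; pose r (a : 'I_n -> G) := v (s - \sum_i a i).
have r0 : r (fun=> 0) = v s by rewrite /r big1 ?subr0.
have [Q [QP QR Qmax]] := maximal_compatible_family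
  (fun a => (forall i, A i (a i)) /\ forall i, v s <= v (a i))
  (fun a b => r a <= r b -> forall i, r a <= v (a i - b i)).
have Q0 : Q (fun=> 0).
  apply: Qmax => [|_ i|a /QP [_ vsa]].
  - by split=> i; [apply: subgroup0 | rewrite valuation0 le_oo].
  - by rewrite subrr valuation0 le_oo.
  - split=> le_r i; rewrite ?subr0 ?sub0r ?valuationN; last by rewrite r0 vsa.
    by apply: le_trans le_r _; rewrite r0 vsa.
have [|c [Ac rc_a]] := decomposition_chain (U := fun a g => r a <= g)
  (fun a Qa => (QP a Qa).1) (fun=> upward_closed_ge) (fun=> le_oo).
  move=> a b Qa Qb; case/orP: (le_total (r a) (r b)) => ab; [left|right].
    by split=> [g|]; [apply: le_trans | apply: QR].
  by split=> [g|]; [apply: le_trans | apply: QR].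
have rc a : Q a -> r a <= r c.
  move=> Qa; rewrite /r -(subrBB s (\sum_i c i) (\sum_i a i)).
  exact: valuationB_ge (lexx _) (upward_closed_sumB upward_closed_ge le_oo (rc_a a Qa)).
have vc i : v s <= v (c i) by have := rc_a _ Q0 i; rewrite subr0 r0.
have [e|ne] := eqVneq (\sum_i c i) s; first by exists c; split.
pose t := s - \sum_i c i.
have St : sumsub A t by apply: sumsubB hA Ss _; exists c.
have t0 : t <> 0 by move/eqP; rewrite subr_eq0 eq_sym (negbTE ne).
have [b [Ab vb lt]] := pseudo_direct_step hpd St t0.
pose c' i := c i + b i.
have lt_cc' : r c < r c' by rewrite /r big_split /= opprD addrA.
have vst : v s <= v t by rewrite -r0; apply: rc.
have Qc' : Q c'.
  apply: Qmax => [|_ i|a Qa].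
  - split=> i; first by apply: subgroupD.
    by apply: valuationD_ge => //; apply: le_trans vst (vb i).
  - by rewrite subrr valuation0 le_oo.
  - split=> [_ i|/(lt_le_trans lt_cc')]; last by rewrite ltNge rc.
    rewrite /c' opprD addrA; apply: valuationB_ge.
      by rewrite valuation_subC; apply: rc_a.
    exact: le_trans (rc a Qa) (vb i).
by have := rc _ Qc'; rewrite leNgt lt_cc'.
Qed.

Lemma sumsub_spherically_complete :
  pseudo_direct v oo A -> spherically_complete (sumsub A) v.
Proof.
move=> hpd N [Nball Nnest]; pose X := sumsub A.
have [Q [QP QR Qmax]] := maximal_compatible_family
  (fun p : ('I_n -> G) * (G -> Prop) =>
     [/\ forall i, A i (p.1 i), N p.2 & p.2 (\sum_i p.1 i)])
  (fun p q => (forall x, q.2 x -> p.2 x) -> forall i, is_radius X p.2 (v (p.1 i - q.1 i))).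
have QA p : Q p -> forall i, A i (p.1 i) by case/QP.
have [|c [Ac Rc]] := decomposition_chain (U := fun p => is_radius X p.2) QA
  (fun=> radius_upward) (fun=> radius_oo).
  move=> p q Qp Qq; have [_ Np Bp] := QP p Qp; have [_ Nq Bq] := QP q Qq.
  case: (Nnest _ _ Np Nq) => sub; [right|left]; split=> [g|]; try exact: QR.
    exact: radius_sub (Nball _ Nq) Bp sub.
  exact: radius_sub (Nball _ Np) Bq sub.
have Xc : X (\sum_i c i) by exists c.
have inQ p : Q p -> p.2 (\sum_i c i).
  move=> Qp; have [_ _ Bp] := QP p Qp.
  exact: (upward_closed_sumB radius_upward radius_oo (Rc p Qp)) Xc Bp (lexx _).
exists (\sum_i c i); split=> // B0 NB0; apply: contrapT => nB0.
have notsub p : Q p -> ~ (forall x, p.2 x -> B0 x) by move=> Qp /(_ _ (inQ p Qp)).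
have sup p : Q p -> forall x, B0 x -> p.2 x.
  by move=> /[dup] Qp /QP [_ Np _]; case: (Nnest _ _ NB0 Np) => // /(notsub p Qp).
have [_ [y [_ By /(_ y) [/(_ By) [Xy _] _]]]] := ball_upball (Nball _ NB0).
have [e [Ae ee ve]] := pseudo_direct_decomposition hpd (sumsubB hA Xy Xc).
pose c' i := c i + e i.
have Qc' : Q (c', B0).
  apply: Qmax => [|_ i|p Qp].
  - by split=> [i||] //=; [apply: subgroupD | rewrite big_split /= ee addrC subrK].
  - by rewrite subrr valuation0; apply: radius_oo.
  - split=> [_ i|/(notsub p Qp)] //=; rewrite /c' opprD addrA.
    have [_ Np _] := QP p Qp.
    have Rpc : is_radius X p.2 (v (p.1 i - c i)) by rewrite valuation_subC; exact: Rc.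
    have Re : is_radius X p.2 (v (e i)).
      exact: radius_upward (radius_mem (Nball _ Np) (sup p Qp y By) (inQ p Qp)) (ve i).
    exact (upward_closedB radius_upward Rpc Re).
exact: (notsub _ Qc').
Qed.

End Decompositions.

End Valuation.

Theorem theorem65 (G : zmodType) (d : Order.disp_t) (Gam : orderType d)
    (oo : Gam) (v : G -> Gam) :
  is_valuation oo v ->
  forall (n : nat) (A : 'I_n -> G -> Prop),
    (forall i, is_subgroup (A i)) ->
    (forall i, spherically_complete (A i) v) ->
    pseudo_direct v oo A ->
    spherically_complete (sumsub A) v /\ optimal_approximation (sumsub A) v.
Proof.
move=> hv n A hA hsc hpd.
have scA := sumsub_spherically_complete hv hA hsc hpd.
by split; last exact (spherically_complete_optimal_approximation hv scA).
Qed.
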